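(* Let $G$ be a group, $g,h,c\in G$, and $k=|G:C_G(h)|$, assumed finite. If the set $\{x\in G:[x,g,h]=c\}$ is $2k$-large in $G$, then $[a,g,h]=1$ for all $a\in G$. Similarly, if $c\in Z(G)$ and the set $\{x\in G:[g,x,h]=c\}$ is $2k$-large in $G$, then $[g,a,h]=1$ for all $a\in G$.
   Context: $[a,b]=a^{-1}b^{-1}ab$ and $[a,b,d]=[[a,b],d]$. A subset $X\subseteq G$ is $k$-large in $G$ if the intersection of any $k$ left translates $a_1X\cap\dots\cap a_kX$ ($a_i\in G$) is non-empty. *)

From mathcomp Require Import all_boot.
Set Implicit Arguments. Unset Strict Implicit. Unset Printing Implicit Defensive.

Record group := Group {
  carrier :> Type;
  gmul : carrier -> carrier -> carrier;
  ginv : carrier -> carrier;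
  gone : carrier;
  gmulA : forall x y z, gmul x (gmul y z) = gmul (gmul x y) z;
  gmul1 : forall x, gmul gone x = x;
  gmulV : forall x, gmul (ginv x) x = gone
}.

Section Defs.
Variable G : group.
Local Notation "x * y" := (gmul x y).
Local Notation "x ^-1" := (ginv x).

Definition comm (a b : G) : G := a^-1 * b^-1 * a * b.
Definition comm3 (a b d : G) : G := comm (comm a b) d.

Definition centralizer (h : G) : G -> Prop := fun x => x * h = h * x.
Definition center : G -> Prop := fun z => forall y : G, z * y = y * z.

Definition has_index (H : G -> Prop) (k : nat) : Prop :=
  exists t : 'I_k -> G,
    (forall x : G, exists i : 'I_k, H ((t i)^-1 * x)) /\
    (forall i j : 'I_k, H ((t i)^-1 * t j) -> i = j).

(* X is n-large: any n left translates a_1 X, ..., a_n X intersect;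
   x \in a X  iff  a^-1 x \in X *)
Definition large (n : nat) (X : G -> Prop) : Prop :=
  forall a : 'I_n -> G, exists x : G, forall i : 'I_n, X ((a i)^-1 * x).
End Defs.

From mathcomp Require Import all_boot.

Set Implicit Arguments.
Unset Strict Implicit.
Unset Printing Implicit Defensive.

(* Among the 2k translates t_i X and t_i b^-1 X, where the t_i are coset
   representatives of C = C_G(h), a common point x gives some u = t_j^-1 x
   in C with u and b u both in X.  Expanding [b u, g, h] (resp. [g, b u, h])
   with the product rules for commutators, the equality with [u, g, h]
   (resp. [g, u, h], central) forces [[b, g]^u, h] = 1 (resp. [[g, b]^u, h] = 1),
   and since u centralizes h this conjugates back to [b, g, h] = 1
   (resp. [g, b, h] = 1). *)

Section GroupTheory.
Variable G : group.
Local Notation "x * y" := (gmul x y).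
Local Notation "x ^-1" := (ginv x).
Local Notation "1" := (gone G).

Definition conjg (x u : G) : G := u^-1 * x * u.
Local Notation "x ^ u" := (conjg x u).

Lemma mulgV (x : G) : x * x^-1 = 1.
Proof.
rewrite -{1}(gmul1 (x * x^-1)) -{1}(gmulV x^-1).
by rewrite -gmulA (gmulA x^-1 x) gmulV gmul1 gmulV.
Qed.

Lemma mulg1 (x : G) : x * 1 = x.
Proof. by rewrite -(gmulV x) gmulA mulgV gmul1. Qed.

Lemma mulKg (x y : G) : x^-1 * (x * y) = y.
Proof. by rewrite gmulA gmulV gmul1. Qed.

Lemma mulKVg (x y : G) : x * (x^-1 * y) = y.
Proof. by rewrite gmulA mulgV gmul1. Qed.

Lemma mulgI (x y z : G) : x * y = x * z -> y = z.
Proof. by move=> e; rewrite -(mulKg x y) e mulKg. Qed.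

Lemma mulIg (x y z : G) : y * x = z * x -> y = z.
Proof. by move=> e; rewrite -(mulg1 y) -(mulgV x) gmulA e -gmulA mulgV mulg1. Qed.

Lemma invMg (x y : G) : (x * y)^-1 = y^-1 * x^-1.
Proof.
by apply: (@mulIg (x * y)); rewrite gmulV -gmulA (gmulA x^-1) gmulV gmul1 gmulV.
Qed.

Lemma invgK (x : G) : (x^-1)^-1 = x.
Proof. by apply: (@mulIg x^-1); rewrite gmulV mulgV. Qed.

Lemma conjMg (x y u : G) : (x * y) ^ u = x ^ u * y ^ u.
Proof. by rewrite /conjg -!gmulA mulKVg. Qed.

Lemma conjVg (x u : G) : (x^-1) ^ u = (x ^ u)^-1.
Proof. by rewrite /conjg !invMg invgK gmulA. Qed.

Lemma conjRg (x y u : G) : (comm x y) ^ u = comm (x ^ u) (y ^ u).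
Proof. by rewrite /comm !conjMg !conjVg. Qed.

Lemma conjg_eq1 (x u : G) : x ^ u = 1 -> x = 1.
Proof.
move=> e; have <- : u * x ^ u * u^-1 = x by rewrite /conjg -!gmulA mulKVg mulgV mulg1.
by rewrite e mulg1 mulgV.
Qed.

Lemma conjg_center (z u : G) : center z -> z ^ u = z.
Proof. by move=> zC; rewrite /conjg -gmulA zC mulKg. Qed.

Lemma conjg_fix_centralizer (h u : G) : centralizer h u -> h ^ u = h.
Proof. by move=> cu; rewrite /conjg -gmulA -cu mulKg. Qed.

Lemma commMgJ (x y z : G) : comm (x * y) z = (comm x z) ^ y * comm y z.
Proof. by rewrite /comm /conjg invMg -!gmulA !mulKVg. Qed.

Lemma commgMJ (x y z : G) : comm x (y * z) = comm x z * (comm x y) ^ z.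
Proof. by rewrite /comm /conjg invMg -!gmulA !mulKVg. Qed.

Lemma commMg_eq_commr (q p h : G) : comm (q * p) h = comm p h -> comm q h = 1.
Proof.
rewrite commMgJ -{2}(gmul1 (comm p h)) => /mulIg.
exact: conjg_eq1.
Qed.

Lemma commMg_eq_comml_center (p q h : G) :
  center (comm p h) -> comm (p * q) h = comm p h -> comm q h = 1.
Proof.
move=> pC; rewrite commMgJ conjg_center // -{2}(mulg1 (comm p h)).
exact: mulgI.
Qed.

Lemma comm_conjg_centralizer_eq1 (w u h : G) :
  centralizer h u -> comm (w ^ u) h = 1 -> comm w h = 1.
Proof.
by move=> cu; rewrite -{1}(conjg_fix_centralizer cu) -conjRg; apply: conjg_eq1.
Qed.

Lemma comm3_translate_left (b u g h : G) :
  centralizer h u -> comm3 (b * u) g h = comm3 u g h -> comm3 b g h = 1.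
Proof.
rewrite /comm3 commMgJ => cu /commMg_eq_commr.
exact: comm_conjg_centralizer_eq1.
Qed.

Lemma comm3_translate_mid (g b u h : G) :
  centralizer h u -> center (comm3 g u h) ->
  comm3 g (b * u) h = comm3 g u h -> comm3 g b h = 1.
Proof.
rewrite /comm3 commgMJ => cu uC /(commMg_eq_comml_center uC).
exact: comm_conjg_centralizer_eq1.
Qed.

Lemma large_index_translate (H X : G -> Prop) (k : nat) :
  has_index H k -> large (2 * k) X ->
  forall b : G, exists u : G, [/\ H u, X u & X (b * u)].
Proof.
move=> [t [cover _]] Xlarge b.
(* Covering G forces k > 0; [j0] is only the default index for [insubd]. *)
have [j0 _] := cover 1.
pose a (i : 'I_(2 * k)) :=
  if i < k then t (insubd j0 i) else t (insubd j0 (i - k)) * b^-1.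
have [x Xx] := Xlarge a.
have [j Hj] := cover x.
have lt_j : j < 2 * k by rewrite mul2n -addnn ltn_addr.
have lt_jk : j + k < 2 * k by rewrite mul2n -addnn ltn_add2r.
exists ((t j)^-1 * x); split => //.
  by have := Xx (Ordinal lt_j); rewrite /a /= ltn_ord valKd.
have := Xx (Ordinal lt_jk); rewrite /a /= ltnNge leq_addl /= addnK valKd.
by rewrite invMg invgK -gmulA.
Qed.

End GroupTheory.

Theorem theorem5p11 (G : group) (g h c : G) (k : nat) :
  has_index (centralizer h) k ->
  (large (2 * k) (fun x => comm3 x g h = c) ->
     forall a : G, comm3 a g h = gone G) /\
  (center c -> large (2 * k) (fun x => comm3 g x h = c) ->
     forall a : G, comm3 g a h = gone G).
Proof.
move=> hindex; split=> [Xlarge | cC Xlarge] a.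
  have [u [cu Xu Xau]] := large_index_translate hindex Xlarge a.
  by apply: (comm3_translate_left cu); rewrite Xu Xau.
have [u [cu Xu Xau]] := large_index_translate hindex Xlarge a.
by apply: (comm3_translate_mid cu); rewrite Xu ?Xau.
Qed.
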